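(* There exists $\epsilon>0$ such that, for all $\mu\in[-1,0.55]$, $d\theta(f_\mu)<-\epsilon$ on $K_\mu\setminus\Delta$.
   Context: The Sprott vector field $f_\mu$ on $\mathbb{R}^3$ is $\dot x=y^2-z-\mu x$, $\dot y=z^2-x-\mu y$, $\dot z=x^2-y-\mu z$. $\Delta:=\mathrm{span}\{(1,1,1)\}$; $\|\mathbf{x}_\perp\|^2=\tfrac23(x^2+y^2+z^2-xy-yz-zx)$; $d\theta:=\frac{1}{\sqrt3}\frac{(z-y)dx+(x-z)dy+(y-x)dz}{\|\mathbf{x}_\perp\|^2}$ on $\mathbb{R}^3\setminus\Delta$. $V(\mathbf{x}):=x+y+z$, $r_\mu:=\|\mathbf{x}-\frac{1+\mu}{2}(1,1,1)\|$, $c:=\frac{3^{3/4}+3^{1/4}}{2}$. For $\mu>-1$, $K_\mu:=\{\mathbf{x}\colon V(\mathbf{x})\ge r_\mu-c(1+\mu)\arctan(\frac{2r_\mu}{3^{1/4}(1+\mu)})-\frac{\sqrt3}{2}(1+\mu)+c(1+\mu)\arctan(3^{1/4})\}\cap V^{-1}[0,3(1+\mu)]$, and $K_{-1}:=\{\mathbf{0}\}$. *)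

From Stdlib Require Import Reals Lra.
Open Scope R_scope.

Definition sprott_x (mu x y z : R) : R := y^2 - z - mu * x.
Definition sprott_y (mu x y z : R) : R := z^2 - x - mu * y.
Definition sprott_z (mu x y z : R) : R := x^2 - y - mu * z.

Definition in_Delta (x y z : R) : Prop := x = y /\ y = z.

Definition perp_norm2 (x y z : R) : R :=
  (2/3) * (x^2 + y^2 + z^2 - x*y - y*z - z*x).

Definition dtheta (x y z vx vy vz : R) : R :=
  (1 / sqrt 3) * (((z - y) * vx + (x - z) * vy + (y - x) * vz) / perp_norm2 x y z).

Definition dtheta_f (mu x y z : R) : R :=
  dtheta x y z (sprott_x mu x y z) (sprott_y mu x y z) (sprott_z mu x y z).

Definition V (x y z : R) : R := x + y + z.

Definition r_mu (mu x y z : R) : R :=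
  let a := (1 + mu) / 2 in
  sqrt ((x - a)^2 + (y - a)^2 + (z - a)^2).

Definition c_const : R := (Rpower 3 (3/4) + Rpower 3 (1/4)) / 2.

Definition in_K (mu x y z : R) : Prop :=
  if Rle_dec mu (-1) then (* used only for mu = -1 *)
    x = 0 /\ y = 0 /\ z = 0
  else
    let r := r_mu mu x y z in
    V x y z >= r - c_const * (1 + mu) * atan (2 * r / (Rpower 3 (1/4) * (1 + mu)))
                 - (sqrt 3 / 2) * (1 + mu)
                 + c_const * (1 + mu) * atan (Rpower 3 (1/4))
    /\ 0 <= V x y z <= 3 * (1 + mu).

From Stdlib Require Import Reals Lra Psatz.
Open Scope R_scope.

(* Write P = perp_norm2 and s = V(x,y,z).  The numerator of dtheta(f_mu) does
   not depend on mu; call it the twist N.  An exact cubic identity gives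
   (N + (3/2 + s) P)^2 <= P^3/2, so N + (3/2 + s - T) P < 0 as soon as
   T > 0 and P < 2 T^2.  We take T = s + 3/2 - sqrt 3/100, which yields
   dtheta(f_mu) = N / (sqrt 3 P) < -1/100.
   The condition P < 2 T^2 comes from the shape of K_mu: P <= r_mu^2, and the
   defining inequality of K_mu (after replacing atan by its Taylor bounds at
   infinity and at 3^(-1/4)) forces s + 1.48 > 0.7072 r_mu, with
   2 * 0.7072^2 > 1.  The case mu = -1 is vacuous since K_{-1} lies in Delta. *)

Lemma nonneg_of_nonneg_derivative (g g' : R -> R) (t : R) :
  0 <= t -> g 0 = 0 ->
  (forall c, derivable_pt_lim g c (g' c)) -> (forall c, 0 <= g' c) ->
  0 <= g t.
Proof.
  intros Ht Hg0 Hd Hpos.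
  destruct (Req_dec t 0) as [->|Hne]; [lra|].
  destruct (MVT_cor2 g g' 0 t) as [c [Hmvt _]]; [lra|intros c _; apply Hd|].
  rewrite Hg0 in Hmvt. specialize (Hpos c). nra.
Qed.

Lemma derivable_pt_lim_scaled_pow (n : nat) (c : R) :
  derivable_pt_lim (fun t => / INR n * t ^ n) c (/ INR n * (INR n * c ^ pred n)).
Proof.
  apply (derivable_pt_lim_scal (fun t => t ^ n)), derivable_pt_lim_pow.
Qed.

Lemma atan_lower_taylor (t : R) : 0 <= t -> t - t^3/3 <= atan t.
Proof.
  intros Ht.
  assert (Hg : 0 <= atan t - t + / INR 3 * t ^ 3).
  { apply (nonneg_of_nonneg_derivative (fun t => atan t - t + / INR 3 * t ^ 3)
             (fun c => / (1 + c^2) - 1 + / INR 3 * (INR 3 * c ^ pred 3))); auto.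
    - rewrite atan_0; ring.
    - intros c. apply derivable_pt_lim_plus; [apply derivable_pt_lim_minus|].
      + apply derivable_pt_lim_atan.
      + apply derivable_pt_lim_id.
      + apply derivable_pt_lim_scaled_pow.
    -
      intros c.
      replace (/ (1 + c^2) - 1 + / INR 3 * (INR 3 * c ^ pred 3))
        with (c^4 / (1 + c^2)) by (simpl; field; nra).
      apply Rle_mult_inv_pos; nra. }
  simpl in Hg. lra.
Qed.

Lemma atan_upper_taylor (t : R) : 0 <= t -> atan t <= t - t^3/3 + t^5/5.
Proof.
  intros Ht.
  assert (Hg : 0 <= t - / INR 3 * t ^ 3 + / INR 5 * t ^ 5 - atan t).
  { apply (nonneg_of_nonneg_derivative
             (fun t => t - / INR 3 * t ^ 3 + / INR 5 * t ^ 5 - atan t)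
             (fun c => 1 - / INR 3 * (INR 3 * c ^ pred 3)
                         + / INR 5 * (INR 5 * c ^ pred 5) - / (1 + c^2))); auto.
    - rewrite atan_0; ring.
    - intros c.
      apply derivable_pt_lim_minus;
        [apply derivable_pt_lim_plus; [apply derivable_pt_lim_minus|]|].
      + apply derivable_pt_lim_id.
      + apply derivable_pt_lim_scaled_pow.
      + apply derivable_pt_lim_scaled_pow.
      + apply derivable_pt_lim_atan.
    -
      intros c.
      replace (1 - / INR 3 * (INR 3 * c ^ pred 3)
                 + / INR 5 * (INR 5 * c ^ pred 5) - / (1 + c^2))
        with (c^6 / (1 + c^2)) by (simpl; field; nra).
      apply Rle_mult_inv_pos; nra. }
  simpl in Hg. lra.
Qed.

Lemma sqrt3_bounds : 1732/1000 < sqrt 3 < 17321/10000.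
Proof.
  pose proof (sqrt_sqrt 3 ltac:(lra)). pose proof (sqrt_pos 3).
  split; nra.
Qed.

Lemma fourth_root3_sq : Rpower 3 (1/4) * Rpower 3 (1/4) = sqrt 3.
Proof.
  rewrite <- Rpower_plus, <- Rpower_sqrt by lra. f_equal. field.
Qed.

Lemma c_const_eq : c_const = Rpower 3 (1/4) * (sqrt 3 + 1) / 2.
Proof.
  unfold c_const. rewrite <- fourth_root3_sq.
  replace (3/4) with (1/4 + 1/4 + 1/4) by field. rewrite !Rpower_plus.
  field.
Qed.

(* The defining inequality of K_mu (with a = 1 + mu), made explicit: writing
   atan X = pi/2 - atan (1/X) and using the Taylor bounds of atan at 1/X and at
   3^(-1/4), the transcendental terms become rational in a and r. *)
Lemma K_condition_expanded (a r s : R) : 0 < a -> 0 < r ->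
  s >= r - c_const * a * atan (2 * r / (Rpower 3 (1/4) * a))
         - (sqrt 3 / 2) * a + c_const * a * atan (Rpower 3 (1/4)) ->
  s >= r + (3 + sqrt 3) / 4 * (a^2 / r) - (sqrt 3 + 1) / 16 * (a^2 / r) * (a / r)^2
         - (44 * sqrt 3 / 45 + 11/30) * a.
Proof.
  intros Ha Hr HK.
  rewrite c_const_eq in HK.
  pose proof fourth_root3_sq as Hqq. pose proof sqrt3_bounds as Hk.
  pose proof (sqrt_sqrt 3 ltac:(lra)) as Hkk.
  assert (Hq : 0 < Rpower 3 (1/4)) by apply exp_pos.
  set (q := Rpower 3 (1/4)) in *. set (k := sqrt 3) in *.
  set (w := q * a / (2 * r)). set (v := / q).
  assert (Hw : 0 < w) by (unfold w; apply Rdiv_lt_0_compat; [apply Rmult_lt_0_compat|]; lra).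
  assert (Hv : 0 < v) by (apply Rinv_0_lt_compat; lra).
  (* complementary angles turn both arctangents into arctangents of small numbers *)
  assert (Hatan : atan (2 * r / (q * a)) - atan q = atan v - atan w).
  { replace (2 * r / (q * a)) with (/ w) by (unfold w; field; lra).
    replace q with (/ v) by (apply Rinv_inv).
    rewrite !atan_inv by lra. ring. }
  pose proof (atan_lower_taylor w ltac:(lra)) as Hlow.
  pose proof (atan_upper_taylor v ltac:(lra)) as Hup.
  assert (Hca : 0 <= q * (k + 1) / 2 * a) by (apply Rmult_le_pos; nra).
  assert (E1 : q * (k + 1) / 2 * a * w = (3 + k) / 4 * (a^2 / r)).
  { transitivity ((q * q) * (k + 1) / 4 * (a^2 / r)); [unfold w; field; lra|].
    rewrite Hqq, <- Hkk. field. lra. }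
  assert (E2 : q * (k + 1) / 2 * a * (w^3/3) = (k + 1) / 16 * (a^2 / r) * (a / r)^2).
  { transitivity ((q * q) * (q * q) * (k + 1) / 48 * (a^2 / r) * (a / r)^2);
      [unfold w; field; lra|].
    rewrite Hqq, Hkk. field. lra. }
  assert (E3 : q * (k + 1) / 2 * a * (v - v^3/3 + v^5/5) = (43 * k / 90 + 11/30) * a).
  { transitivity ((k + 1) * a / 2 * (1 - / (3 * (q * q)) + / (5 * ((q * q) * (q * q)))));
      [unfold v; field; lra|].
    rewrite Hqq, Hkk. field_simplify_eq; [|lra].
    replace (k ^ 2) with 3 by (rewrite <- Hkk; ring). ring. }
  assert (Hmono_w : q * (k + 1) / 2 * a * (w - w^3/3) <= q * (k + 1) / 2 * a * atan w)
    by (apply Rmult_le_compat_l; lra).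
  assert (Hmono_v : q * (k + 1) / 2 * a * atan v <= q * (k + 1) / 2 * a * (v - v^3/3 + v^5/5))
    by (apply Rmult_le_compat_l; lra).
  rewrite Rmult_minus_distr_l in Hmono_w.
  assert (Hdiff : q * (k + 1) / 2 * a * atan (2 * r / (q * a)) - q * (k + 1) / 2 * a * atan q
                  = q * (k + 1) / 2 * a * atan v - q * (k + 1) / 2 * a * atan w)
    by (rewrite <- !Rmult_minus_distr_l, Hatan; reflexivity).
  lra.
Qed.

(* The quadratic form controlling the radial bound is positive: it equals
   0.2928 (r - 1.92 a)^2 + 0.00102 a^2 + r (1.48 - 0.93615 a) up to rounding. *)
Lemma radial_quadratic_pos (a r : R) : 0 < a <= 155/100 -> 0 < r ->
  0 < 2928/10000 * r^2 - 20605/10000 * a * r + 10804/10000 * a^2 + 148/100 * r.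
Proof.
  intros Ha Hr. pose proof (pow2_ge_0 (r - 192/100 * a)). nra.
Qed.

(* Radial bound on K_mu, for a = 1 + mu in (0, 1.55]: the height s = V(x)
   controls the distance r = r_mu, with 0.7072 slightly above 1/sqrt 2. *)
Lemma K_radial_bound (a r s : R) : 0 < a <= 155/100 -> 0 <= r -> 0 <= s ->
  s >= r - c_const * a * atan (2 * r / (Rpower 3 (1/4) * a))
         - (sqrt 3 / 2) * a + c_const * a * atan (Rpower 3 (1/4)) ->
  s + 148/100 > 7072/10000 * r.
Proof.
  intros Ha Hr Hs HK.
  destruct (Rle_or_lt r 2) as [Hr2|Hr2]; [lra|].
  apply K_condition_expanded in HK; [|lra|lra].
  pose proof sqrt3_bounds as Hk. set (k := sqrt 3) in *.
  set (t := a^2 / r) in *. set (u := a / r) in *.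
  assert (Htr : t * r = a^2) by (unfold t; field; lra).
  assert (Hur : u * r = a) by (unfold u; field; lra).
  assert (Ht : 0 <= t) by nra.
  assert (Hu : 0 < u <= 775/1000) by (split; nra).
  assert (Hquart : (k + 1) / 16 * t * u^2 <= 1026/10000 * t).
  { assert (Hku : (k + 1) / 16 * u^2 <= 1026/10000) by nra.
    replace ((k + 1) / 16 * t * u^2) with ((k + 1) / 16 * u^2 * t) by ring.
    apply Rmult_le_compat_r; lra. }
  assert (Hlin : (44 * k / 45 + 11/30) * a <= 20605/10000 * a) by nra.
  assert (Hs' : s >= r + 10804/10000 * t - 20605/10000 * a) by nra.
  (* multiplying by r turns the lower bound into the positive quadratic form *)
  assert (Hpos : 0 < 2928/10000 * r + 10804/10000 * t - 20605/10000 * a + 148/100).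
  { apply (Rmult_lt_reg_l r); [lra|]. rewrite Rmult_0_r.
    replace (r * (2928/10000 * r + 10804/10000 * t - 20605/10000 * a + 148/100))
      with (2928/10000 * r^2 - 20605/10000 * a * r + 10804/10000 * (t * r) + 148/100 * r)
      by ring.
    rewrite Htr. apply radial_quadratic_pos; lra. }
  lra.
Qed.

(* The numerator of dtheta(f_mu): the rotation of the quadratic part of the
   Sprott field around Delta (the linear part -mu x contributes nothing). *)
Definition sprott_twist (x y z : R) : R :=
  (z - y) * (y^2 - z) + (x - z) * (z^2 - x) + (y - x) * (x^2 - y).

Lemma dtheta_f_twist (mu x y z : R) : 0 < perp_norm2 x y z ->
  dtheta_f mu x y z = sprott_twist x y z / (sqrt 3 * perp_norm2 x y z).
Proof.
  intros HP. pose proof sqrt3_bounds.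
  unfold dtheta_f, dtheta, sprott_x, sprott_y, sprott_z, sprott_twist.
  field. lra.
Qed.

Lemma dtheta_f_lt_of_twist (mu x y z d : R) : 0 < perp_norm2 x y z ->
  sprott_twist x y z + sqrt 3 * d * perp_norm2 x y z < 0 -> dtheta_f mu x y z < - d.
Proof.
  intros HP Htw. pose proof sqrt3_bounds.
  assert (Hden : 0 < sqrt 3 * perp_norm2 x y z) by nra.
  rewrite dtheta_f_twist by exact HP.
  replace (sprott_twist x y z / (sqrt 3 * perp_norm2 x y z))
    with ((sprott_twist x y z + sqrt 3 * d * perp_norm2 x y z)
            / (sqrt 3 * perp_norm2 x y z) - d) by (field; lra).
  pose proof (Rdiv_neg_pos _ _ Htw Hden). lra.
Qed.

(* Exact cubic identity in the centred coordinates x - s/3, y - s/3, z - s/3: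
   (twist + (3/2 + s) P)^2 + 3/4 D^2 = P^3/2, hence the bound below. *)
Lemma twist_cubic_bound (x y z : R) :
  (sprott_twist x y z + (3/2 + V x y z) * perp_norm2 x y z)^2
    <= perp_norm2 x y z ^ 3 / 2.
Proof.
  set (m := V x y z / 3).
  set (D := 3 * ((x - m) * (y - m) * (z - m)) - (x - y) * (y - z) * (z - x)).
  assert (Hid : (sprott_twist x y z + (3/2 + V x y z) * perp_norm2 x y z)^2 + 3/4 * D^2
                = perp_norm2 x y z ^ 3 / 2).
  { unfold D, m, sprott_twist, perp_norm2, V. field. }
  pose proof (pow2_ge_0 D). lra.
Qed.

Lemma twist_negative (x y z T : R) :
  0 < perp_norm2 x y z -> 0 < T -> perp_norm2 x y z < 2 * T^2 ->
  sprott_twist x y z + (3/2 + V x y z - T) * perp_norm2 x y z < 0.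
Proof.
  intros HP HT HPT.
  pose proof (twist_cubic_bound x y z) as Hcub.
  set (P := perp_norm2 x y z) in *.
  set (E := sprott_twist x y z + (3/2 + V x y z) * P) in *.
  assert (HE2 : E^2 < (T * P)^2).
  { replace ((T * P)^2) with (T^2 * P^2) by ring.
    replace (P^3 / 2) with (P / 2 * P^2) in Hcub by field.
    assert (P / 2 * P^2 < T^2 * P^2) by (apply Rmult_lt_compat_r; nra).
    lra. }
  assert (HTP : 0 < T * P) by nra.
  assert (HE : E < T * P).
  { destruct (Rlt_or_le E (T * P)) as [|Hge]; [assumption|].
    assert ((T * P)^2 <= E^2) by (apply pow_incr; lra). lra. }
  unfold E in HE. lra.
Qed.

Lemma perp_norm2_pos (x y z : R) : ~ in_Delta x y z -> 0 < perp_norm2 x y z.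
Proof.
  intros HD. unfold perp_norm2.
  destruct (Rle_or_lt (x^2 + y^2 + z^2 - x*y - y*z - z*x) 0) as [Hle|]; [|lra].
  exfalso. apply HD.
  pose proof (pow2_ge_0 (x - y)). pose proof (pow2_ge_0 (y - z)).
  pose proof (pow2_ge_0 (z - x)).
  split; nra.
Qed.

(* The perpendicular norm is at most the distance to any point of Delta, in
   particular to the centre ((1+mu)/2)(1,1,1) defining r_mu. *)
Lemma perp_norm2_le_r_mu (mu x y z : R) : perp_norm2 x y z <= r_mu mu x y z ^ 2.
Proof.
  unfold r_mu. set (b := (1 + mu) / 2).
  pose proof (pow2_ge_0 (x - b)). pose proof (pow2_ge_0 (y - b)).
  pose proof (pow2_ge_0 (z - b)).
  rewrite pow2_sqrt by lra.
  assert (Hid : (x - b)^2 + (y - b)^2 + (z - b)^2 - perp_norm2 x y z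
                = (x + y + z - 3 * b)^2 / 3) by (unfold perp_norm2; field).
  pose proof (pow2_ge_0 (x + y + z - 3 * b)). lra.
Qed.

Theorem theorem6 :
  exists eps : R, 0 < eps /\
    forall mu : R, -1 <= mu <= 55 / 100 ->
    forall x y z : R, in_K mu x y z -> ~ in_Delta x y z ->
      dtheta_f mu x y z < - eps.
Proof.
  exists (1/100). split; [lra|].
  intros mu Hmu x y z HK HD.
  unfold in_K in HK. destruct (Rle_dec mu (-1)) as [Hm|Hm].
  {
    destruct HK as [-> [-> ->]]. exfalso. apply HD. split; reflexivity. }
  destruct HK as [HKcond [Hs0 _]].
  set (r := r_mu mu x y z) in *. set (s := V x y z) in *.
  assert (Hr0 : 0 <= r) by apply sqrt_pos.
  pose proof (K_radial_bound (1 + mu) r s ltac:(lra) Hr0 Hs0 HKcond) as Hrad.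
  pose proof (perp_norm2_pos x y z HD) as HP.
  pose proof (perp_norm2_le_r_mu mu x y z) as HPr. fold r in HPr.
  pose proof sqrt3_bounds as Hk.
  set (T := s + 3/2 - sqrt 3 / 100).
  assert (HrT : 0 <= 7072/10000 * r < T) by (unfold T; split; lra).
  assert (HPT : perp_norm2 x y z < 2 * T^2).
  { assert ((7072/10000 * r)^2 <= T^2) by (apply pow_incr; lra).
    replace ((7072/10000 * r)^2) with (50013184/100000000 * r^2) in * by field.
    lra. }
  pose proof (twist_negative x y z T HP ltac:(lra) HPT) as Htw.
  fold s in Htw. replace (3/2 + s - T) with (sqrt 3 * (1/100)) in Htw by (unfold T; field).
  exact (dtheta_f_lt_of_twist mu x y z (1/100) HP Htw).
Qed.
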